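(* Let $S$ be a finite $2$-group and suppose there are $A,B\in\mathcal{A}(S)$ with $AB=S$. If $C_B(a)=A\cap B$ for every $a\in A\setminus(A\cap B)$, then $\mathcal{A}(S)=\{A,B\}$ and every involution of $S$ lies in $A\cup B$.
   Context: $\mathcal{A}(S)$ denotes the set of elementary abelian subgroups of $S$ of maximal order (maximal rank). *)

From mathcomp Require Import all_boot all_fingroup all_solvable.
Set Implicit Arguments. Unset Strict Implicit. Unset Printing Implicit Defensive.
Local Open Scope group_scope.

Definition calA (gT : finGroupType) (p : nat) (S : {set gT}) : {set {group gT}} :=
  [set E : {group gT} | (E \in 'E_p(S)) &&
     [forall F : {group gT}, (F \in 'E_p(S)) ==> (#|F| <= #|E|)%N]].

From mathcomp Require Import all_boot all_fingroup all_solvable.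
Local Open Scope group_scope.

(* Write x = a b with a in A, b in B.  If x^2 = 1 then a and b commute, so
   b centralises a; unless a already lies in B, the centraliser hypothesis puts
   b into A and hence x into A.  Thus every involution of S = AB lies in A or B,
   and so does every elementary abelian subgroup E of S.  A group is never the
   union of two proper subgroups, so E lies in A or in B, and maximality of the
   order of E forces equality. *)

Lemma abelem2_sqr {gT : finGroupType} {E : {group gT}} {x : gT} :
  2.-abelem E -> x \in E -> x ^+ 2 = 1.
Proof. by case/abelemP=> // _; apply. Qed.

Lemma commute_of_involutions (gT : finGroupType) (a b : gT) :
  a ^+ 2 = 1 -> b ^+ 2 = 1 -> (a * b) ^+ 2 = 1 -> commute a b.
Proof.
rewrite !expg2 => aa bb abab.
have: a * b * (a * b) * (b * a) = b * a by rewrite abab mul1g.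
by rewrite !mulgA -(mulgA _ b b) bb mulg1 -(mulgA _ a a) aa mulg1.
Qed.

Lemma group_subsetU (gT : finGroupType) (E A B : {group gT}) :
  E \subset A :|: B -> (E \subset A) || (E \subset B).
Proof.
move=> sEAB; apply/norP=> -[/subsetPn[x Ex xA] /subsetPn[y Ey yB]].
have memAB z : z \in E -> z \notin A -> z \in B.
  by move=> Ez zA; move/subsetP/(_ z Ez): sEAB; rewrite inE (negbTE zA).
have memBA z : z \in E -> z \notin B -> z \in A.
  by move=> Ez zB; move/subsetP/(_ z Ez): sEAB; rewrite inE (negbTE zB) orbF.
have xB := memAB x Ex xA; have yA := memBA y Ey yB.
move/subsetP/(_ (x * y) (groupM Ex Ey)): sEAB.
by rewrite inE groupMr // groupMl // (negbTE xA) (negbTE yB).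
Qed.

Lemma calA_sub_eq {gT : finGroupType} {p : nat} {S : {set gT}}
    {E F : {group gT}} :
  E \in calA p S -> F \in calA p S -> E \subset F -> E :=: F.
Proof.
rewrite in_set => /andP[_ /forallP/(_ F) maxE]; rewrite in_set => /andP[EpF _] sEF.
by apply/eqP; rewrite eqEcard sEF (implyP maxE EpF).
Qed.

Section CentraliserCondition.

Context {gT : finGroupType} {A B : {group gT}}.
Hypotheses (abA : 2.-abelem A) (abB : 2.-abelem B).
Hypothesis cBA : forall a, a \in A :\: (A :&: B) -> 'C_B[a] = A :&: B.

Lemma sqr1_mulg_mem_setU x : x \in A * B -> x ^+ 2 = 1 -> x \in A :|: B.
Proof.
case/mulsgP=> a b Aa Bb -> abab.
have [aB | aNB] := boolP (a \in B); first by apply/setUP; right; apply: groupM.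
have aD : a \in A :\: (A :&: B) by rewrite !inE (negbTE aNB) Aa.
have : b \in 'C_B[a].
  apply/setIP; split=> //; apply/cent1P/esym.
  exact: commute_of_involutions (abelem2_sqr abA Aa) (abelem2_sqr abB Bb) abab.
by rewrite cBA // => /setIP[bA _]; rewrite inE groupM.
Qed.

Lemma abelem2_sub_mulg {E : {group gT}} :
  2.-abelem E -> E \subset A * B -> (E \subset A) || (E \subset B).
Proof.
move=> abE sEAB; apply: group_subsetU; apply/subsetP=> x Ex.
exact: sqr1_mulg_mem_setU (subsetP sEAB x Ex) (abelem2_sqr abE Ex).
Qed.

End CentraliserCondition.

Theorem lemma2p14 (gT : finGroupType) (S A B : {group gT}) :
  2.-group S ->
  A \in calA 2 S -> B \in calA 2 S ->
  A * B = S ->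
  (forall a, a \in A :\: (A :&: B) -> 'C_B[a] = A :&: B) ->
  calA 2 S = [set A; B] /\
  (forall x, x \in S -> #[x] = 2%N -> x \in A :|: B).
Proof.
move=> _ AA AB defS cBA.
have abA : 2.-abelem A by case/setIdP: AA => /pElemP[].
have abB : 2.-abelem B by case/setIdP: AB => /pElemP[].
split=> [|x]; last first.
  rewrite -defS => Sx ox; apply: sqr1_mulg_mem_setU => //.
  by rewrite -ox expg_order.
apply/setP=> E; rewrite in_set2; apply/idP/idP => [EA|]; last first.
  by case/orP=> /eqP->.
have [sES abE] : E \subset S /\ 2.-abelem E by case/setIdP: EA => /pElemP.
rewrite -defS in sES.
case/orP: (abelem2_sub_mulg abA abB cBA abE sES) => [sEA|sEB].
  by rewrite (group_inj (calA_sub_eq EA AA sEA)) eqxx.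
by rewrite (group_inj (calA_sub_eq EA AB sEB)) eqxx orbT.
Qed.
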